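(* Let $m \geq 1$ be an integer and let $q \in (m,m+1)$ be a Pisot number which is also a simple Parry number. Then every Galois conjugate $q'$ of $q$ satisfies $|q'| \geq c_m$. More precisely, if $q' \neq q$ is a real Galois conjugate of $q$, then \[ |q'| \geq \frac{\sqrt{m^2+4}-m}{2} \geq c_m. \]
   Context: A Pisot number is a real algebraic integer $q>1$ all of whose other Galois conjugates have absolute value strictly less than $1$. A real number $q>1$ is a simple Parry number if the greedy $q$-expansion of $1$ is finite, i.e. $1 = \sum_{i=1}^n a_i q^{-i}$ with digits $a_i$ produced by the greedy algorithm (iterating $x \mapsto qx \bmod 1$ from $1$ terminates at $0$). Define $c_1 = \frac{\sqrt{5}-1}{2}$; define $c_2$ to be the absolute value of the root of minimal modulus of $x^4-3x^3+x^2-2x-1$; and for $m \geq 3$ define $c_m = \frac{m+1-\sqrt{m^2+2m-3}}{2}$. *)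

From HB Require Import structures.
From mathcomp Require Import all_boot all_order all_algebra all_field.
Set Implicit Arguments. Unset Strict Implicit. Unset Printing Implicit Defensive.
Import Order.TTheory GRing.Theory Num.Theory.
Local Open Scope ring_scope.

Definition galois_conj (q q' : algC) : Prop :=
  root (minCpoly q) q'.

Definition pisot (q : algC) : Prop :=
  [/\ q \is Num.real, 1 < q, q \in Aint &
      forall q', galois_conj q q' -> q' != q -> `|q'| < 1].

Definition beta_T (q x : algC) : algC := q * x - (Num.floor (q * x))%:~R.

Definition simple_parry (q : algC) : Prop :=
  [/\ q \is Num.real, 1 < q & exists n : nat, iter n (beta_T q) 1 = 0].

Definition poly_c2 : {poly algC} :=
  'X^4 - 3%:R *: 'X^3 + 'X^2 - 2%:R *: 'X - 1.

(* the absolute value of a root of minimal modulus of poly_c2 *)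
Definition c2 : algC :=
  let s := sval (closed_field_poly_normal poly_c2) in
  \big[Num.min/ `|head 0 s|]_(z <- s) `|z|.

Definition c_ (m : nat) : algC :=
  if m == 1%N then (sqrtC 5%:R - 1) / 2%:R
  else if m == 2%N then c2
  else (m.+1%:R - sqrtC (m%:R ^+ 2 + 2%:R * m%:R - 3%:R)) / 2%:R.

From HB Require Import structures.
From mathcomp Require Import all_boot all_order all_algebra all_field.
From mathcomp Require Import lra.
Set Implicit Arguments. Unset Strict Implicit. Unset Printing Implicit Defensive.
Import Order.TTheory GRing.Theory Num.Theory.
Local Open Scope ring_scope.

(* Write the greedy expansion of 1 as 1 = d_0/q + ... + d_n/q^(n+1), with
   digits 0 <= d_k <= m and d_n >= 1.  Then q is a root of the rational
   polynomial P = X^(n+1) - d_0 X^n - ... - d_n, hence so is every conjugate.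
   Running the Horner recursion s_(k+1) = x s_k - d_k of P backwards from
   s_(n+1) = 0 shows that P has no root x < 1 with x^2 < 1 + m x, so every real
   conjugate z <> q (which has |z| < 1) satisfies |z| >= t, the positive root
   of t^2 + m t = 1.  A non-real conjugate z comes with its complex conjugate;
   since the norm of q is a nonzero integer and all conjugates but the simple
   root q lie in the unit disc, q |z|^2 >= 1, whence |z|^2 > 1/(m+1) >= t^2.
   Finally c_m <= t: for m = 2 because the quartic defining c_2 has a root in
   [-2/5, 0], otherwise by elementary estimates. *)

Lemma nat_down_ind (P : nat -> Prop) n :
  P n -> (forall k, (k < n)%N -> P k.+1 -> P k) -> P 0%N.
Proof.
move=> Pn IH; suff Psub j : (j <= n)%N -> P (n - j)%N.
  by have := Psub n (leqnn n); rewrite subnn.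
elim: j => [|j IHj] jn; first by rewrite subn0.
rewrite -(subnSK jn) in IHj *; apply: IH; last exact: IHj (ltnW jn).
by rewrite -subSn // subSS leq_subr.
Qed.

Section DigitRecursion.
Variables (R : realFieldType) (M x : R) (d s : nat -> R) (n : nat).
Hypotheses (d_ge0 : forall k, 0 <= d k) (d_le : forall k, d k <= M)
  (dn_ge1 : 1 <= d n) (s0 : s 0%N = 1) (sS : forall k, s k.+1 = x * s k - d k).

(* [nra] does not use section hypotheses, hence the [have := dn_ge1] below. *)

Lemma digit_recursion_neq0_nonneg : 0 <= x -> x < 1 -> s n.+1 != 0.
Proof.
move=> x_ge0 x_lt1; apply/eqP => sn0.
suff : 1 < s 0%N by rewrite s0 ltxx.
apply: (@nat_down_ind (fun k => 1 < s k) n) => /= [|k _].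
  by have := dn_ge1; have := sS n; rewrite sn0; nra.
by have := d_ge0 k; rewrite sS; nra.
Qed.

(* Backwards, [x s_k = s_(k+1) + d_k] alternates between the two rays, since
   [1 / x < x - M] is exactly [x^2 < 1 + M x] when [x < 0]. *)
Lemma digit_recursion_neq0_neg : x < 0 -> x ^+ 2 < 1 + M * x -> s n.+1 != 0.
Proof.
move=> x_lt0 xM; apply/eqP => sn0.
have M_ge1 : 1 <= M by apply: le_trans dn_ge1 (d_le n).
suff : s 0%N < x - M \/ 1 < s 0%N by rewrite s0; lra.
apply: (@nat_down_ind (fun k => s k < x - M \/ 1 < s k) n) => /= [|k _].
  by left; have := dn_ge1; have := sS n; rewrite sn0; nra.
have := d_ge0 k; have := d_le k; rewrite sS => dk_ge0 dk_le [sk1|sk1].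
  by right; nra.
by left; nra.
Qed.

Lemma digit_recursion_neq0 : x < 1 -> x ^+ 2 < 1 + M * x -> s n.+1 != 0.
Proof.
move=> x_lt1 xM; have [x_lt0|x_ge0] := ltP x 0.
  exact: digit_recursion_neq0_neg.
exact: digit_recursion_neq0_nonneg.
Qed.

End DigitRecursion.

Section QuadraticRoot.
Variable R : realFieldType.

Lemma quad_root_sqrt (M B : R) : 0 <= B -> B ^+ 2 = M ^+ 2 + 4 ->
  0 < (B - M) / 2 /\ ((B - M) / 2) ^+ 2 + M * ((B - M) / 2) = 1.
Proof. by move=> B_ge0 BE; split; nra. Qed.

Lemma quad_root_le1 (M t : R) : 0 <= M -> 0 < t -> t ^+ 2 + M * t = 1 -> t <= 1.
Proof. by move=> M_ge0 t_gt0 tE; nra. Qed.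

Lemma quad_root_le_norm (M t x : R) : 0 <= M -> 0 < t -> t ^+ 2 + M * t = 1 ->
  1 + M * x <= x ^+ 2 -> t <= `|x|.
Proof.
move=> M_ge0 t_gt0 tE xM.
have Nx_le : - x <= `|x| by rewrite -normrN ler_norm.
have := normr_ge0 x; have := real_normK (num_real x); nra.
Qed.

Lemma quad_root_le_sqr (M t a : R) : 0 <= M -> 0 < t -> t ^+ 2 + M * t = 1 ->
  0 <= a -> 1 <= (M + 1) * a ^+ 2 -> t <= a.
Proof.
move=> M_ge0 t_gt0 tE a_ge0 aM; have t_le1 := quad_root_le1 M_ge0 t_gt0 tE.
have Mt2_le1 : (M + 1) * t ^+ 2 <= 1.
  have : M * t ^+ 2 <= M * t by rewrite ler_wpM2l // expr2 ler_piMr // ltW.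
  lra.
rewrite leNgt; apply/negP => a_lt_t.
have : (M + 1) * a ^+ 2 < (M + 1) * t ^+ 2.
  by rewrite ltr_pM2l ?ltr_pXn2r ?nnegrE ?(ltW t_gt0) //; lra.
lra.
Qed.

Lemma c_bound_le_quad_root (M A B : R) :
  2 <= M -> 0 <= A -> A ^+ 2 = M ^+ 2 + 2 * M - 3 ->
  0 <= B -> B ^+ 2 = M ^+ 2 + 4 -> (M + 1 - A) / 2 <= (B - M) / 2.
Proof.
move=> M_ge2 A_ge0 AE B_ge0 BE.
have B_ge : 2 * M ^+ 2 + M + 4 <= (2 * M + 1) * B.
  by rewrite -(ler_pXn2r (n := 2)) ?nnegrE ?mulr_ge0 //; nra.
nra.
Qed.

End QuadraticRoot.

Lemma real_bigmin_le (R : numDomainType) (I : eqType) (r : seq I) (f : I -> R) x0 i :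
  x0 \is Num.real -> {in r, forall j, f j \is Num.real} -> i \in r ->
  \big[Num.min/x0]_(j <- r) f j <= f i.
Proof.
move=> x0R; elim: r => // j r IHr fR; rewrite in_cons big_cons.
have rR : {in r, forall k, f k \is Num.real}.
  by move=> k kr; apply: fR; rewrite in_cons kr orbT.
have minR : \big[Num.min/x0]_(k <- r) f k \is Num.real.
  by rewrite big_seq_cond bigmin_real // => k /andP[/rR].
rewrite comparable_ge_min ?real_comparable ?fR ?mem_head // => /orP[/eqP <-|ir].
  by rewrite lexx.
by rewrite IHr ?orbT.
Qed.

Lemma prod_norm_le_pair (R : numDomainType) (s : seq R) a b :
  a != b -> a \in s -> b \in s -> {in s, forall x, `|x| <= 1} ->
  \prod_(x <- s) `|x| <= `|a| * `|b|.
Proof.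
move=> ab a_s b_s s_le1; have b_ra : b \in rem a s by rewrite rem_mem // eq_sym.
rewrite (perm_big _ (perm_to_rem a_s)) big_cons (perm_big _ (perm_to_rem b_ra)).
rewrite big_cons /= mulrA ler_piMr ?mulr_ge0 // big_seq prodr_ile1 // => x.
by move=> /mem_rem/mem_rem/s_le1 ->; rewrite normr_ge0.
Qed.

Lemma deriv_neq0 (R : numDomainType) (p : {poly R}) : (1 < size p)%N -> p^`() != 0.
Proof.
move=> p_gt1; apply/eqP => p'0; have := coef_deriv p (size p).-2.
rewrite p'0 coef0 => /esym/eqP; rewrite mulrn_eq0 /= prednK -?lead_coefE.
- by rewrite lead_coef_eq0 -size_poly_eq0; case: (size p) p_gt1.
- by case: (size p) p_gt1 => [|[]].
Qed.

(* [digit_poly d (n + 1)] is [X^(n+1) - d_0 X^n - ... - d_n]. *)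
Fixpoint digit_poly (d : nat -> int) (k : nat) : {poly rat} :=
  if k is k'.+1 then 'X * digit_poly d k' - ((d k')%:~R)%:P else 1.

Lemma horner_digit_poly0 (F : numFieldType) d (x : F) :
  (map_poly ratr (digit_poly d 0)).[x] = 1.
Proof. by rewrite rmorph1 hornerC. Qed.

Lemma horner_digit_polyS (F : numFieldType) d k (x : F) :
  (map_poly ratr (digit_poly d k.+1)).[x] =
    x * (map_poly ratr (digit_poly d k)).[x] - (d k)%:~R.
Proof. by rewrite /= !(rmorphB, rmorphM) /= map_polyX map_polyC !hornerE /= ratr_int. Qed.

Lemma digit_poly_noroot (R : realFieldType) (M : int) (d : nat -> int) n (x : R) :
  (forall k, 0 <= d k <= M) -> 1 <= d n -> x < 1 -> x ^+ 2 < 1 + M%:~R * x ->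
  ~~ root (map_poly ratr (digit_poly d n.+1)) x.
Proof.
move=> d_bounds dn_ge1.
apply: (@digit_recursion_neq0 _ M%:~R x (fun k => (d k)%:~R)
  (fun k => (map_poly ratr (digit_poly d k)).[x])).
- by move=> k; have /andP[dk_ge0 _] := d_bounds k; rewrite ler0z.
- by move=> k; have /andP[_ dk_le] := d_bounds k; rewrite ler_int.
- by rewrite ler1z.
- exact: horner_digit_poly0.
- by move=> k; rewrite horner_digit_polyS.
Qed.

Definition beta_orbit (q : algC) (k : nat) : algC := iter k (beta_T q) 1.
Definition beta_digit (q : algC) (k : nat) : int := Num.floor (q * beta_orbit q k).

Lemma beta_orbitS q k :
  beta_orbit q k.+1 = q * beta_orbit q k - (beta_digit q k)%:~R.
Proof. by rewrite /beta_orbit iterS. Qed.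

Lemma horner_digit_poly_beta q k :
  (map_poly ratr (digit_poly (beta_digit q) k)).[q] = beta_orbit q k.
Proof.
elim: k => [|k IHk]; first exact: horner_digit_poly0.
by rewrite horner_digit_polyS IHk beta_orbitS.
Qed.

Lemma beta_orbit_bounds q k : q \is Num.real ->
  [/\ beta_orbit q k \is Num.real, 0 <= beta_orbit q k & beta_orbit q k <= 1].
Proof.
move=> q_real; elim: k => [|k [rR r_ge0 r_le1]].
  by rewrite /beta_orbit /= rpred1 ler01 lexx.
have qrR : q * beta_orbit q k \is Num.real by rewrite rpredM.
rewrite beta_orbitS /beta_digit; split.
- by rewrite rpredB // Rreal_int // intr_int.
- by rewrite subr_ge0 real_floor_le.
- by rewrite lerBlDl ltW // -[1]/(1%:~R) -intrD real_floorD1_gt.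
Qed.

Lemma beta_digit_bounds (m : nat) q : q \is Num.real -> 0 < q -> q < m.+1%:R ->
  forall k, 0 <= beta_digit q k <= m.
Proof.
move=> q_real q_gt0 q_lt k; have [rR r_ge0 r_le1] := beta_orbit_bounds k q_real.
have qrR : q * beta_orbit q k \is Num.real by rewrite rpredM.
rewrite /beta_digit real_floor_ge0 ?mulr_ge0 ?(ltW q_gt0) //= -ltzD1.
rewrite real_floor_lt_int // intrD -pmulrn natr1 (le_lt_trans _ q_lt) //.
by rewrite ler_piMr // ltW.
Qed.

Lemma simple_parry_digit_poly q : simple_parry q ->
  exists n, root (map_poly ratr (digit_poly (beta_digit q) n.+1)) q /\
            1 <= beta_digit q n.
Proof.
case=> q_real q_gt1 ex_zero; have ex0 : exists n, beta_orbit q n == 0.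
  by case: ex_zero => n /eqP; exists n.
case: (ex_minnP ex0) => -[|n] /eqP rn0 minn.
  by rewrite /beta_orbit /= in rn0; move/eqP: rn0; rewrite oner_eq0.
have rn_neq0 : beta_orbit q n != 0 by apply/negP => /minn; rewrite ltnn.
exists n; split; first by rewrite /root horner_digit_poly_beta rn0.
have [_ r_ge0 _] := beta_orbit_bounds n q_real.
move/eqP: rn0; rewrite beta_orbitS subr_eq0 => /eqP qr_eq.
have : 0 < q * beta_orbit q n.
  by rewrite mulr_gt0 ?(lt_trans ltr01 q_gt1) // lt_def rn_neq0.
by rewrite qr_eq ltr0z.
Qed.

Lemma galois_conj_root_rat (q z : algC) (p : {poly rat}) :
  galois_conj q z -> root (map_poly ratr p) q -> root (map_poly ratr p) z.
Proof.
rewrite /galois_conj; have [r [-> _] dvdE] := minCpolyP q => rz /[!dvdE] r_p.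
by apply: root_dvdp rz; rewrite dvdp_map.
Qed.

Lemma galois_conj_conjC (q z : algC) : galois_conj q z -> galois_conj q z^*.
Proof.
rewrite /galois_conj; have [r [-> _] _] := minCpolyP q => rz.
suff <- : map_poly Num.conj (map_poly ratr r : {poly algC}) = map_poly ratr r.
  by rewrite rmorph_root.
by rewrite -map_poly_comp (eq_map_poly (fmorph_rat Num.conj)).
Qed.

Lemma galois_conj0 (x : algC) : x != 0 -> ~ galois_conj x 0.
Proof.
move=> x_neq0; rewrite /galois_conj; have [p [Dp _] dvdE] := minCpolyP x.
rewrite Dp -[0](rmorph0 (ratr : {rmorphism rat -> algC})) fmorph_root.
move=> /factor_theorem[r]; rewrite subr0 => Dp_r.
have r_neq0 : r != 0.
  apply: contraTneq (size_minCpoly x) => r0.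
  by rewrite Dp Dp_r r0 mul0r rmorph0 size_poly0.
have : p %| r.
  rewrite -dvdE; have := root_minCpoly x; rewrite Dp Dp_r rmorphM /= map_polyX.
  by rewrite /root hornerMX mulf_eq0 (negPf x_neq0) orbF.
by move/(dvdp_leq r_neq0); rewrite Dp_r size_mulX // ltnn.
Qed.

Lemma minCpoly_simple_root (x : algC) : ~~ root (minCpoly x)^`() x.
Proof.
have [p [Dp _] dvdE] := minCpolyP x.
have p_gt1 : (1 < size p)%N.
  by rewrite -(size_map_poly (ratr : {rmorphism rat -> algC})) -Dp size_minCpoly.
rewrite Dp deriv_map dvdE; apply/negP => /(dvdp_leq (deriv_neq0 p_gt1)).
by rewrite leqNgt lt_size_deriv // -size_poly_gt0 (ltn_trans _ p_gt1).
Qed.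

Lemma minCpoly_rem_root (x : algC) (s : seq algC) :
  minCpoly x = \prod_(y <- s) ('X - y%:P) -> x \notin rem x s.
Proof.
move=> Ds; have x_s : x \in s by rewrite -root_prod_XsubC -Ds root_minCpoly.
apply: contra (minCpoly_simple_root x) => x_rem.
rewrite Ds (perm_big _ (perm_to_rem x_s)) big_cons derivM derivXsubC mul1r.
rewrite /root hornerD hornerM hornerXsubC subrr mul0r addr0 -/(root _ x).
by rewrite root_prod_XsubC.
Qed.

Lemma minCpoly_prod_norm_ge1 (x : algC) (s : seq algC) :
  x \in Aint -> x != 0 -> minCpoly x = \prod_(y <- s) ('X - y%:P) ->
  1 <= \prod_(y <- s) `|y|.
Proof.
move=> x_int x_neq0 Ds.
have c0_int : (minCpoly x).[0] \in Num.int.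
  by rewrite horner_coef0; move/polyOverP: x_int; apply.
have c0_neq0 : (minCpoly x).[0] != 0.
  by apply/negP => /eqP c0; apply: (galois_conj0 x_neq0); apply/eqP.
have := norm_intr_ge1 c0_int c0_neq0; rewrite Ds horner_prod normr_prod.
by under eq_bigr do rewrite hornerXsubC sub0r normrN.
Qed.

(* |N(q)| >= 1, and in the product of the moduli of the roots of the minimal
   polynomial q occurs once, z and z^* once each, every other factor is < 1. *)
Lemma pisot_nonreal_conj_norm (q z : algC) :
  pisot q -> galois_conj q z -> z \isn't Num.real -> 1 <= q * `|z| ^+ 2.
Proof.
case=> q_real q_gt1 q_int conj_lt1 qz z_nreal.
have q_gt0 : 0 < q := lt_trans ltr01 q_gt1.
have [s Ds] := closed_field_poly_normal (minCpoly q).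
rewrite (monicP (minCpoly_monic q)) scale1r in Ds.
have conjE x : root (minCpoly q) x = (x \in s) by rewrite Ds root_prod_XsubC.
have q_s : q \in s by rewrite -conjE root_minCpoly.
have nonreal_neq_q x : x \isn't Num.real -> x != q.
  by move=> x_nreal; apply: contraNneq x_nreal => ->.
have z'_nreal : z^* \isn't Num.real by rewrite CrealE conjCK eq_sym -CrealE.
have := minCpoly_prod_norm_ge1 q_int (lt0r_neq0 q_gt0) Ds.
rewrite (perm_big _ (perm_to_rem q_s)) big_cons gtr0_norm // => /le_trans; apply.
rewrite ler_pM2l // expr2 -{2}(norm_conjC z); apply: prod_norm_le_pair.
- by rewrite eq_sym -CrealE.
- by rewrite rem_mem ?nonreal_neq_q // -conjE.
- by rewrite rem_mem ?nonreal_neq_q // -conjE; apply: galois_conj_conjC.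
- move=> x x_rem; rewrite ltW // conj_lt1 /galois_conj ?conjE ?(mem_rem x_rem) //.
  by apply: contraTneq x_rem => ->; apply: minCpoly_rem_root Ds.
Qed.

Lemma algR_leE (x y : algR) : (x <= y) = (algRval x <= algRval y).
Proof. by []. Qed.

Lemma algRval_horner_rat (p : {poly rat}) (x : algR) :
  algRval (map_poly ratr p).[x] = (map_poly ratr p).[algRval x].
Proof. by rewrite -horner_map -map_poly_comp (eq_map_poly (fmorph_rat algRval)). Qed.

Lemma algR_sqrtC (e : algR) : 0 <= e ->
  exists s : algR, [/\ algRval s = sqrtC (algRval e), 0 <= s & s ^+ 2 = e].
Proof.
move=> e_ge0; have s_ge0 : 0 <= sqrtC (algRval e) by rewrite sqrtC_ge0.
exists (in_algR (ger0_real s_ge0)); split => //.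
by apply: val_inj; rewrite rmorphXn /= sqrtCK.
Qed.

Definition real_conj_bound (m : nat) : algC :=
  (sqrtC (m%:R ^+ 2 + 4%:R) - m%:R) / 2%:R.

Lemma real_conj_bound_algR m : exists t : algR,
  [/\ algRval t = real_conj_bound m, 0 < t & t ^+ 2 + m%:R * t = 1].
Proof.
have e_ge0 : 0 <= (m%:R ^+ 2 + 4%:R : algR) by rewrite addr_ge0 ?exprn_ge0 ?ler0n.
have [B [BE B_ge0 BB]] := algR_sqrtC e_ge0.
have [t_gt0 t_quad] := quad_root_sqrt B_ge0 BB.
exists ((B - m%:R) / 2); split => //.
rewrite fmorph_div rmorphB !rmorph_nat -[X in X - _]/(algRval B) BE.
by rewrite rmorphD rmorphXn !rmorph_nat.
Qed.

Lemma poly_c2_small_root :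
  exists2 x : algR, root poly_c2 (algRval x) & - (2 / 5) <= x <= 0.
Proof.
pose pR : {poly algR} := 'X^4 - 3%:R *: 'X^3 + 'X^2 - 2%:R *: 'X - 1.
have pRE : map_poly algRval pR = poly_c2.
  rewrite /pR /poly_c2 !(rmorphB, rmorphD) /= !map_polyZ !map_polyXn map_polyX.
  by rewrite !rmorph_nat rmorph1.
have [x /andP[x_ge x_le] rx] : exists2 x, - (2 / 5) <= x <= 0 & root (- pR) x.
  apply: poly_ivt; first lra.
  by rewrite /pR !hornerE /=; apply/andP; split; lra.
by exists x; rewrite ?x_ge // -pRE fmorph_root -rootN.
Qed.

Lemma c2_le_norm_root x : root poly_c2 x -> c2 <= `|x|.
Proof.
have c2_neq0 : poly_c2 != 0.
  apply/eqP => /(congr1 (horner^~ 0)); rewrite /poly_c2 !hornerE /= !expr0n !mulr0 /=.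
  by rewrite !subr0 addr0 sub0r => /eqP; rewrite oppr_eq0 oner_eq0.
rewrite /c2; case: (closed_field_poly_normal poly_c2) => s Ds /= rx.
apply: real_bigmin_le => [|y _|]; rewrite ?normr_real //.
by move: rx; rewrite Ds rootZ ?lead_coef_eq0 // root_prod_XsubC.
Qed.

Lemma c2_le_real_conj_bound : c2 <= real_conj_bound 2.
Proof.
have [x rx /andP[x_ge x_le]] := poly_c2_small_root.
have [t [tE t_gt0 t_quad]] := real_conj_bound_algR 2.
apply: le_trans (c2_le_norm_root rx) _.
rewrite -tE -[`|algRval x|]/(algRval `|x|) -algR_leE ler0_norm //; nra.
Qed.

Lemma c_le_real_conj_bound m : (1 <= m)%N -> c_ m <= real_conj_bound m.
Proof.
move=> m_ge1; rewrite /c_ /real_conj_bound.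
case: eqP => [->|m_neq1]; first by rewrite expr1n.
case: eqP => [->|m_neq2]; first exact: c2_le_real_conj_bound.
have M_ge3 : 3 <= m%:R :> algR.
  by rewrite ler_nat; case: m m_ge1 m_neq1 m_neq2 => [|[|[]]].
have A2_ge0 : 0 <= m%:R ^+ 2 + 2 * m%:R - 3 :> algR by nra.
have B2_ge0 : 0 <= m%:R ^+ 2 + 4 :> algR by nra.
have [A [AE A_ge0 AA]] := algR_sqrtC A2_ge0.
have [B [BE B_ge0 BB]] := algR_sqrtC B2_ge0.
have M_ge2 : 2 <= m%:R :> algR by lra.
have := c_bound_le_quad_root M_ge2 A_ge0 AA B_ge0 BB.
rewrite algR_leE !(fmorph_div, rmorphB, rmorphD) /=.
rewrite -[X in (_ - X) / _ <= _]/(algRval A) -[X in _ <= (X - _) / _]/(algRval B) AE BE.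
by rewrite !(rmorphB, rmorphD, rmorphM, rmorphXn, rmorph_nat) natr1.
Qed.

Section PisotParryConjugates.
Variables (m : nat) (q : algC).
Hypotheses (q_lt : q < m.+1%:R) (q_pisot : pisot q) (q_parry : simple_parry q).

Let q_real : q \is Num.real. Proof. by case: q_pisot. Qed.
Let q_gt1 : 1 < q. Proof. by case: q_pisot. Qed.
Let q_gt0 : 0 < q. Proof. exact: lt_trans ltr01 q_gt1. Qed.

Lemma real_conj_bound_le_real_conj z :
  galois_conj q z -> z \is Num.real -> z != q -> real_conj_bound m <= `|z|.
Proof.
move=> qz z_real z_neq_q; pose x := in_algR z_real.
have [n [root_q dn_ge1]] := simple_parry_digit_poly q_parry.
have [t [tE t_gt0 t_quad]] := real_conj_bound_algR m.
have x_lt1 : x < 1.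
  have z_lt1 : `|z| < 1 by case: q_pisot => _ _ _; apply.
  by rewrite -[x < 1]/(z < 1) (le_lt_trans (real_ler_norm z_real)).
have root_x : root (map_poly ratr (digit_poly (beta_digit q) n.+1)) x.
  rewrite /root -(inj_eq val_inj) /= algRval_horner_rat.
  exact: galois_conj_root_rat qz root_q.
have x_quad : 1 + m%:R * x <= x ^+ 2.
  rewrite leNgt; apply: contraL root_x; rewrite pmulrn.
  exact: digit_poly_noroot (beta_digit_bounds q_real q_gt0 q_lt) dn_ge1 x_lt1.
rewrite -tE -[`|z|]/(algRval `|x|) -algR_leE.
exact: quad_root_le_norm (ler0n _ m) t_gt0 t_quad x_quad.
Qed.

Lemma real_conj_bound_le_nonreal_conj z :
  galois_conj q z -> z \isn't Num.real -> real_conj_bound m <= `|z|.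
Proof.
move=> qz z_nreal; have qz2 := pisot_nonreal_conj_norm q_pisot qz z_nreal.
pose a := in_algR (normr_real z); pose Q := in_algR q_real.
have [t [tE t_gt0 t_quad]] := real_conj_bound_algR m.
have Qa2 : 1 <= Q * a ^+ 2 by rewrite algR_leE rmorphM rmorphXn.
have Q_le : Q <= m%:R + 1 by rewrite algR_leE rmorphD rmorph_nat natr1 ltW.
have a_ge0 : 0 <= a by rewrite algR_leE normr_ge0.
have a2_ge1 : 1 <= (m%:R + 1) * a ^+ 2.
  exact: le_trans Qa2 (ler_wpM2r (exprn_ge0 2 a_ge0) Q_le).
rewrite -tE -[`|z|]/(algRval a) -algR_leE.
exact: quad_root_le_sqr (ler0n _ m) t_gt0 t_quad a_ge0 a2_ge1.
Qed.

Lemma real_conj_bound_le_conj z : galois_conj q z -> real_conj_bound m <= `|z|.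
Proof.
move=> qz; have [->|z_neq_q] := eqVneq z q.
  have [t [tE t_gt0 t_quad]] := real_conj_bound_algR m.
  rewrite -tE gtr0_norm // ltW // (le_lt_trans _ q_gt1) //.
  exact: quad_root_le1 (ler0n _ m) t_gt0 t_quad.
have [z_real|z_nreal] := boolP (z \is Num.real).
  exact: real_conj_bound_le_real_conj.
exact: real_conj_bound_le_nonreal_conj.
Qed.

End PisotParryConjugates.

Theorem theorem2p4 (m : nat) (q : algC) :
  (1 <= m)%N -> m%:R < q < m.+1%:R -> pisot q -> simple_parry q ->
  (forall q' : algC, galois_conj q q' -> c_ m <= `|q'|) /\
  (forall q' : algC, galois_conj q q' -> q' \is Num.real -> q' != q ->
     (sqrtC (m%:R ^+ 2 + 4%:R) - m%:R) / 2%:R <= `|q'| /\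
     c_ m <= (sqrtC (m%:R ^+ 2 + 4%:R) - m%:R) / 2%:R).
Proof.
move=> m_ge1 /andP[_ q_lt] q_pisot q_parry.
have c_le := c_le_real_conj_bound m_ge1.
have t_le := real_conj_bound_le_conj q_lt q_pisot q_parry.
split=> [z qz | z qz _ _]; first exact: le_trans c_le (t_le z qz).
by split; [exact: t_le | exact: c_le].
Qed.
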